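(* Let $\varphi$ be a $k$-CNF formula with $m$ clauses in which each variable appears in at most $d$ clauses, and suppose $\varphi$ is extremal. If $d\le \frac{2^k}{ek}+1$, then the following algorithm outputs a uniformly random satisfying assignment of $\varphi$, with $O(m)$ expected total number of resampled clauses: assign each variable an independent uniformly random truth value; while at least one clause is unsatisfied, simultaneously resample independently and uniformly all variables occurring in all currently unsatisfied clauses; output the current assignment.
   Context: A $k$-CNF formula is a conjunction of clauses, each a disjunction of exactly $k$ literals. The formula is extremal if for every two clauses $C_i,C_j$ that share a variable, there is some variable $x$ appearing in both $C_i$ and $C_j$ with one occurrence positive and the other negative. *)

From HB Require Import structures.
From mathcomp Require Import all_boot all_order all_algebra.
From mathcomp Require Import all_classical all_reals all_analysis.
Set Implicit Arguments. Unset Strict Implicit. Unset Printing Implicit Defensive.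
Import Order.TTheory GRing.Theory Num.Theory.
Local Open Scope ring_scope.

(* A literal over variables 'I_n is a pair (x, b): b = true means the positive
   literal x, b = false the negative literal ~x. *)

Section CNF.
Variables (n m k : nat) (phi : 'I_m -> k.-tuple ('I_n * bool)).

Definition lit_true (s : {ffun 'I_n -> bool}) (l : 'I_n * bool) : bool :=
  s l.1 == l.2.

Definition clause_sat (s : {ffun 'I_n -> bool}) (i : 'I_m) : bool :=
  has (lit_true s) (phi i).

Definition satisfies (s : {ffun 'I_n -> bool}) : bool :=
  [forall i, clause_sat s i].

Definition cvars (i : 'I_m) : {set 'I_n} :=
  [set x | has (fun l : 'I_n * bool => l.1 == x) (phi i)].

Definition is_kCNF : Prop := forall i, uniq (map fst (phi i)).

Definition max_occurrence (d : nat) : Prop :=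
  forall x : 'I_n, (#|[set i | x \in cvars i]| <= d)%N.

Definition extremal : Prop :=
  forall i j : 'I_m, i != j -> (exists x, (x \in cvars i) && (x \in cvars j)) ->
    exists (x : 'I_n) (b : bool), ((x, b) \in (phi i : seq _)) /\ ((x, ~~ b) \in (phi j : seq _)).

Definition unsat (s : {ffun 'I_n -> bool}) : {set 'I_m} :=
  [set i | ~~ clause_sat s i].

Definition resample_vars (s : {ffun 'I_n -> bool}) : {set 'I_n} :=
  \bigcup_(i in unsat s) cvars i.

Variable R : realType.

(* When s is satisfying this is the identity,
   i.e. the algorithm has stopped and its output stays s forever. *)
Definition step_kernel (s t : {ffun 'I_n -> bool}) : R :=
  if [forall x, (x \notin resample_vars s) ==> (t x == s x)]
  then (2%:R ^+ #|resample_vars s|)^-1 else 0.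

Fixpoint state_law (r : nat) (t : {ffun 'I_n -> bool}) : R :=
  match r with
  | 0 => (2%:R ^+ n)^-1
  | r'.+1 => \sum_(s : {ffun 'I_n -> bool}) state_law r' s * step_kernel s t
  end.

Definition expected_resampled (T : nat) : R :=
  \sum_(r < T) \sum_(s : {ffun 'I_n -> bool}) state_law r s * (#|unsat s|)%:R.

Definition num_sat : nat := #|[set s | satisfies s]|.

End CNF.

(* By extremality the clauses falsified by an assignment are pairwise
   variable-disjoint, and every other clause sharing a variable with one of them
   is satisfied.  So the assignments falsifying a set [J] of clauses are those
   agreeing with a fixed falsifier on the variables of [J], and their other
   unsatisfied clauses lie in [far J] (no variable shared with [J]) and depend
   only on the other variables.  Hence one round, averaged over the assignments
   whose set of unsatisfied clauses is [J], is uniform over those with no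
   unsatisfied clause in [far J]: the law of the chain depends only on the set
   of unsatisfied clauses, and the satisfying assignments, which form one such
   class, are absorbing and equally likely.

   With [n_avoid S] (resp. [n_unsat1 S]) the number of assignments with no
   (resp. exactly one) unsatisfied clause in [S], the potential
   [n_unsat1 (far J) / n_avoid (far J)] makes the expected number of
   unsatisfied clauses at each round a telescoping difference, so the expected
   number of resampled clauses is at most [2 m] given [0 < n_avoid S] and
   [n_unsat1 S <= m * n_avoid S].  These follow from a local-lemma
   induction showing that, given no unsatisfied clause in [S], a clause outside
   [S] is unsatisfied with probability at most [1/2].  The probability of not
   being absorbed after [r] rounds is nonincreasing and sums to at most the
   expected number of resampled clauses, hence is [O(m / r)]. *)

From HB Require Import structures.
From mathcomp Require Import all_boot all_order all_algebra.
From mathcomp Require Import reals ring lra.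
Import Order.TTheory GRing.Theory Num.Theory.
Local Open Scope ring_scope.
Set Implicit Arguments. Unset Strict Implicit. Unset Printing Implicit Defensive.

Lemma uniq_map_inj_in (T1 T2 : eqType) (f : T1 -> T2) (s : seq T1) :
  uniq (map f s) -> {in s &, injective f}.
Proof.
elim: s => //= c s IHs /andP[fc_notin uniq_s] a b; rewrite !inE.
have notin_fc y : y \in s -> f y != f c.
  by move=> ys; apply: contraNneq fc_notin => <-; exact: map_f.
case/predU1P=> [->|a_s]; case/predU1P=> [->|b_s] fab //.
- by case/eqP: (notin_fc b b_s).
- by case/eqP: (notin_fc a a_s).
- exact: IHs.
Qed.

Section IndicatorSums.
Variables (R : ringType) (T : finType).

Lemma sumr_indicator (P : pred T) : \sum_(x : T) (P x)%:R = #|P|%:R :> R.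
Proof.
rewrite -sum1_card natr_sum [RHS]big_mkcond; apply: eq_bigr => x _.
by rewrite unfold_in; case: (P x).
Qed.

Lemma sumr_mkcond_indicator (P : pred T) (F : T -> R) :
  \sum_(x | P x) F x = \sum_x (P x)%:R * F x.
Proof. by rewrite big_mkcond; apply: eq_bigr => x _; case: (P x); rewrite ?mul1r ?mul0r. Qed.

Lemma sumr_indicator_eq (a : T) (F : T -> R) : \sum_x (x == a)%:R * F x = F a.
Proof. by rewrite -sumr_mkcond_indicator big_pred1_eq. Qed.

End IndicatorSums.

Lemma setU_eql (T : finType) (J A : {set T}) : J :&: A = set0 -> (J :|: A == J) = (A == set0).
Proof.
move=> JA0; apply/eqP/eqP => [JAJ | ->]; last exact: setU0.
by rewrite -JA0; apply/esym/setIidPr; rewrite -JAJ subsetUr.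
Qed.

Lemma setDDl_sub (T : finType) (A B : {set T}) : A \subset B -> B :\: (B :\: A) = A.
Proof. by move=> AB; rewrite setDDr setDv set0U; apply/setIidPr. Qed.

Lemma big_setD1_index (R : Type) (idx : R) (op : Monoid.com_law idx) (T : finType)
    (B : {set T}) (F : {set T} -> R) :
  \big[op/idx]_(J : {set T} | (J \subset B) && (#|B :\: J| == 1)%N) F J =
  \big[op/idx]_(i in B) F (B :\ i).
Proof.
have B_setD1 i : i \in B -> B :\: (B :\ i) = [set i].
  by move=> iB; rewrite setDDl_sub // sub1set.
rewrite -(big_imset F (h := fun i => B :\ i)) /=; last first.
  by move=> i j iB jB eq_ij; apply: set1_inj; rewrite -(B_setD1 i iB) -(B_setD1 j jB) eq_ij.
apply: eq_bigl => J; apply/andP/imsetP => [[JB /cards1P[i BJ]] | [i iB ->]].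
  have iB : i \in B by have := set11 i; rewrite -BJ => /setDP[].
  by exists i; rewrite // -BJ setDDl_sub.
by rewrite subsetDl B_setD1 // cards1.
Qed.

Lemma sum_setD1_disjoint (R : ringType) (T : finType) (B S : {set T}) :
  \sum_(i in B) ((B :\ i) :&: S == set0)%:R
  = (B :&: S == set0)%:R * #|B|%:R + (#|B :&: S| == 1)%N%:R :> R.
Proof.
under eq_bigr do rewrite setIDAC setD_eq0.
case: (set_0Vmem (B :&: S)) => [-> | [a aBS]].
  by rewrite cards0 eqxx mul1r addr0; under eq_bigr do rewrite sub0set; rewrite sumr_const.
have -> : (B :&: S == set0) = false by apply/negbTE/set0Pn; exists a.
rewrite mul0r add0r; case: (boolP (#|B :&: S| == 1)%N) => [/cards1P[b BSb] | not1].
  have bB : b \in B by move: (set11 b); rewrite -BSb => /setIP[].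
  rewrite BSb (bigD1 b) //= sub1set set11 big1 ?addr0 // => i /andP[_ neq_ib].
  by rewrite sub1set in_set1 eq_sym (negbTE neq_ib).
rewrite big1 // => i _; suff /negbTE -> : ~~ (B :&: S \subset [set i]) by [].
apply: contra not1 => BS_i; rewrite eqn_leq (leq_trans (subset_leq_card BS_i)) ?cards1 //.
by rewrite card_gt0; apply/set0Pn; exists a.
Qed.

Definition agree_off (T : finType) (W : {set T}) (X Y : {ffun T -> bool}) : bool :=
  [forall z, (z \notin W) ==> (X z == Y z)].

Lemma agree_offP (T : finType) (W : {set T}) (X Y : {ffun T -> bool}) :
  reflect (forall z, z \notin W -> X z = Y z) (agree_off W X Y).
Proof.
apply: (iffP forallP) => agreeXY z; first by move/(implyP (agreeXY z))/eqP.
by apply/implyP => /agreeXY ->.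
Qed.

Lemma card_agree_off (T : finType) (W : {set T}) (Y : {ffun T -> bool}) :
  #|[pred X | agree_off W X Y]| = (2 ^ #|W|)%N.
Proof.
pose flip (A : {set T}) : {ffun T -> bool} := [ffun z => Y z (+) (z \in A)].
have flip_inj : injective flip.
  move=> A B /ffunP eqAB; apply/setP => z.
  by have := eqAB z; rewrite !ffunE => /(congr1 (addb (Y z))); rewrite !addKb.
rewrite -card_powerset -(card_imset _ flip_inj); apply: eq_card => X; rewrite inE.
apply/forallP/imsetP => [agreeXY | [A A_W ->] z].
  exists [set z | X z != Y z].
    rewrite powersetE; apply/subsetP => z; rewrite inE; apply: contraR => zW.
    by have /implyP/(_ zW) := agreeXY z.
  by apply/ffunP => z; rewrite !ffunE inE; case: (X z); case: (Y z).
rewrite powersetE in A_W; apply/implyP => zW; rewrite ffunE.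
have zA : z \notin A by apply: contra zW; exact: (subsetP A_W).
by rewrite (negbTE zA) addbF.
Qed.

Section Formula.
Variables (n m k d : nat) (phi : 'I_m -> k.-tuple ('I_n * bool)).
Hypotheses (k_gt0 : (0 < k)%N) (kcnf : is_kCNF phi) (max_occ : max_occurrence phi d)
  (ext : extremal phi).

Local Notation assignment := {ffun 'I_n -> bool}.
Local Notation cvars := (cvars phi).
Local Notation unsat := (unsat phi).

Lemma cvarsP i z : reflect (exists b, (z, b) \in (phi i : seq _)) (z \in cvars i).
Proof.
rewrite inE; apply: (iffP hasP) => [[[y b] yb /= /eqP <-]|[b zb]]; first by exists b.
by exists (z, b).
Qed.

Lemma in_unsat (s : assignment) i : (i \in unsat s) = ~~ clause_sat phi s i.
Proof. by rewrite inE. Qed.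

Lemma satisfiesE (s : assignment) : satisfies phi s = (unsat s == set0).
Proof.
apply/forallP/eqP => [sat_s | /setP unsat0 i].
  by apply/setP => i; rewrite in_unsat sat_s in_set0.
by have := unsat0 i; rewrite in_unsat in_set0 => /negbFE.
Qed.

Lemma eq_in_clause_sat (s t : assignment) i :
  {in cvars i, s =1 t} -> clause_sat phi s i = clause_sat phi t i.
Proof.
move=> eq_st; apply: eq_in_has => -[z b] zb.
by rewrite /lit_true /= eq_st //; apply/cvarsP; exists b.
Qed.

Lemma unsat_lit (s : assignment) i z b : i \in unsat s -> (z, b) \in (phi i : seq _) -> s z = ~~ b.
Proof.
by rewrite in_unsat => /hasPn lits_false /lits_false; rewrite /lit_true /=; case: (s z); case: b.
Qed.

Lemma cvars_neq0 i : cvars i != set0.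
Proof.
apply/set0Pn; exists (tnth (phi i) (Ordinal k_gt0)).1; apply/cvarsP.
by exists (tnth (phi i) (Ordinal k_gt0)).2; rewrite -surjective_pairing mem_tnth.
Qed.

Lemma card_cvars i : #|cvars i| = k.
Proof.
rewrite -[RHS](size_tuple (phi i)) -(size_map fst) -(card_uniqP (kcnf i)).
by apply: eq_card => z; apply/cvarsP/mapP => [[b zb]|[[y b] yb ->]]; [exists (z, b) | exists b].
Qed.

Definition falsifier i : assignment := [ffun z => (z, false) \in (phi i : seq _)].

Lemma falsifier_unsat i : i \in unsat (falsifier i).
Proof.
rewrite in_unsat; apply/hasPn => -[z [|]] zb; rewrite /lit_true ffunE /=; last by rewrite zb.
by apply/negP => /eqP zf; have [] := uniq_map_inj_in (kcnf i) zb zf erefl.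
Qed.

Lemma unsat_disjoint (s : assignment) i j : i \in unsat s -> j \in unsat s -> i != j ->
  [disjoint cvars i & cvars j].
Proof.
move=> i_unsat j_unsat neq_ij; apply/negPn/negP; rewrite -setI_eq0 => /set0Pn[z].
rewrite inE => /andP[zi zj].
have [y [b [yb_i ynb_j]]] := ext neq_ij (ex_intro _ z (introT andP (conj zi zj))).
by have := unsat_lit i_unsat yb_i; rewrite (unsat_lit j_unsat ynb_j) negbK; case: (b).
Qed.

Definition vars_of (J : {set 'I_m}) : {set 'I_n} := \bigcup_(i in J) cvars i.

Definition nbhd (J : {set 'I_m}) : {set 'I_m} :=
  [set j | [exists i in J, ~~ [disjoint cvars i & cvars j]]].

Definition far (J : {set 'I_m}) : {set 'I_m} := ~: nbhd J.

Lemma sub_nbhd (J : {set 'I_m}) : J \subset nbhd J.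
Proof.
apply/subsetP => i iJ; rewrite inE; apply/existsP; exists i.
by rewrite iJ -setI_eq0 setIid cvars_neq0.
Qed.

Lemma setI_far (J : {set 'I_m}) : J :&: far J = set0.
Proof. by apply/eqP; rewrite /far -setDE setD_eq0 sub_nbhd. Qed.

Lemma in_nbhd1 u j : (j \in nbhd [set u]) = ~~ [disjoint cvars u & cvars j].
Proof.
rewrite inE; apply/existsP/idP => [[i /andP[/set1P -> //]] | dep_uj].
by exists u; rewrite set11.
Qed.

Lemma far_vars_of (J : {set 'I_m}) c : c \in far J -> [disjoint cvars c & vars_of J].
Proof.
rewrite !inE negb_exists => /forallP indep_c; rewrite -setI_eq0; apply/eqP/setP => z.
rewrite in_setI in_set0; apply/negP => /andP[zc /bigcupP[i iJ zi]].
move: (indep_c i); rewrite iJ negbK -setI_eq0 => /eqP/setP/(_ z).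
by rewrite in_setI in_set0 zi zc.
Qed.

Lemma sub_unsatE (J : {set 'I_m}) (s X : assignment) : J \subset unsat s ->
  (J \subset unsat X) = [forall z in vars_of J, X z == s z].
Proof.
move=> /subsetP J_unsat_s; apply/subsetP/forall_inP => [J_unsat_X z | agreeJ i iJ].
  case/bigcupP => i iJ /cvarsP[b zb].
  by rewrite (unsat_lit (J_unsat_X i iJ) zb) (unsat_lit (J_unsat_s i iJ) zb).
rewrite in_unsat (@eq_in_clause_sat X s) -?in_unsat ?J_unsat_s // => z zi.
by apply/eqP/agreeJ/bigcupP; exists i.
Qed.

Lemma unsat_far_eq (J : {set 'I_m}) (X Y : assignment) :
  agree_off (vars_of J) X Y -> unsat X :&: far J = unsat Y :&: far J.
Proof.
move=> /agree_offP agreeXY; apply/setP => c; rewrite !in_setI.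
case c_far: (c \in far J); rewrite ?andbF // !andbT !in_unsat.
congr negb; apply: eq_in_clause_sat => z zc; apply: agreeXY.
by rewrite (disjointFr (far_vars_of c_far) zc).
Qed.

Lemma unsat_decomp (J : {set 'I_m}) (X : assignment) : J \subset unsat X ->
  unsat X = J :|: (unsat X :&: far J).
Proof.
move=> /subsetP J_unsat; apply/setP => c; rewrite in_setU in_setI.
case cJ: (c \in J); first by rewrite J_unsat.
case c_unsat: (c \in unsat X) => //=; apply/esym; rewrite inE; apply/negP; rewrite inE.
case/existsP => i /andP[iJ dep_ic]; have neq_ic : i != c by apply: contraFneq cJ => <-.
by case/negP: dep_ic; apply: unsat_disjoint (J_unsat i iJ) c_unsat neq_ic.
Qed.

Lemma unsat_far (J : {set 'I_m}) (X : assignment) : J \subset unsat X ->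
  unsat X :&: far J = unsat X :\: J.
Proof.
move=> J_unsat; rewrite {2}(unsat_decomp J_unsat) setDUl setDv set0U.
by apply/esym/setDidPl; rewrite -setI_eq0 -setIA [far J :&: J]setIC setI_far setI0.
Qed.

Definition overlay (W : {set 'I_n}) (s t : assignment) : assignment :=
  [ffun z => if z \in W then s z else t z].

Lemma agree_off_overlay W (s t : assignment) : agree_off W (overlay W s t) t.
Proof. by apply/agree_offP => z zW; rewrite ffunE (negbTE zW). Qed.

Lemma eq_overlay W (s t X : assignment) :
  (X == overlay W s t) = [forall z in W, X z == s z] && agree_off W t X.
Proof.
apply/eqP/andP => [-> | [/forall_inP agree_s /agree_offP agree_t]].
  split; first by apply/forall_inP => z zW; rewrite ffunE zW.
  by apply/agree_offP => z zW; rewrite ffunE (negbTE zW).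
by apply/ffunP => z; rewrite ffunE; case: ifP => [/agree_s/eqP | /negbT/agree_t].
Qed.

Lemma unsat_overlay (J : {set 'I_m}) (s t : assignment) : J \subset unsat s ->
  unsat (overlay (vars_of J) s t) = J :|: (unsat t :&: far J).
Proof.
move=> J_unsat; have J_unsat_ov : J \subset unsat (overlay (vars_of J) s t).
  by rewrite (sub_unsatE _ J_unsat); apply/forall_inP => z zJ; rewrite ffunE zJ.
by rewrite {1}(unsat_decomp J_unsat_ov) (unsat_far_eq (agree_off_overlay _ _ _)).
Qed.

Variable R : realType.

Definition n_avoid (S : {set 'I_m}) : R :=
  \sum_(X : assignment) (unsat X :&: S == set0)%:R.

Definition class_size (J : {set 'I_m}) : R := \sum_(X : assignment) (unsat X == J)%:R.

Lemma n_avoid_ge0 S : 0 <= n_avoid S.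
Proof. by apply: sumr_ge0 => X _; exact: ler0n. Qed.

Lemma class_size_gt0 (s : assignment) : 0 < class_size (unsat s).
Proof.
rewrite /class_size (bigD1 s) //= eqxx ltr_pwDl ?ltr01 //.
by apply: sumr_ge0 => X _; exact: ler0n.
Qed.

Lemma sum_unsat_far (J : {set 'I_m}) (s : assignment) (Q : pred {set 'I_m}) :
  J \subset unsat s ->
  \sum_(X : assignment) (Q (unsat X :&: far J))%:R =
  2 ^+ #|vars_of J| * \sum_(X : assignment) ((J \subset unsat X) && Q (unsat X :&: far J))%:R :> R.
Proof.
move=> J_unsat; set W := vars_of J.
transitivity (\sum_(t : assignment) \sum_(X : assignment)
                (X == overlay W s t)%:R * (Q (unsat X :&: far J))%:R : R).
  by apply: eq_bigr => t _; rewrite sumr_indicator_eq (unsat_far_eq (agree_off_overlay W s t)).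
rewrite exchange_big big_distrr /=; apply: eq_bigr => X _.
rewrite -big_distrl -mulnb natrM mulrA; congr (_ * _).
under eq_bigr do rewrite eq_overlay -mulnb natrM.
rewrite -big_distrr /= sumr_indicator card_agree_off natrX mulrC.
by rewrite (sub_unsatE _ J_unsat).
Qed.

Lemma n_avoid_far (s : assignment) :
  n_avoid (far (unsat s)) = 2 ^+ #|vars_of (unsat s)| * class_size (unsat s).
Proof.
rewrite /n_avoid (sum_unsat_far (fun A => A == set0) (subxx (unsat s))); congr (_ * _).
apply: eq_bigr => X _; congr ((nat_of_bool _)%:R); set J := unsat s.
case: (boolP (J \subset unsat X)) => [J_unsat | J_not_unsat] /=.
  rewrite {2}(unsat_decomp J_unsat) setU_eql //.
  by rewrite setIA [J :&: _]setIC -setIA setI_far setI0.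
by apply/esym/negbTE; apply: contra J_not_unsat => /eqP ->.
Qed.

Lemma n_avoid_far_gt0 (s : assignment) : 0 < n_avoid (far (unsat s)).
Proof. by rewrite n_avoid_far mulr_gt0 ?exprn_gt0 ?ltr0n ?class_size_gt0. Qed.

Lemma sum_class_agree_off (s t : assignment) :
  \sum_(u : assignment) ((unsat u == unsat s) && agree_off (vars_of (unsat s)) t u)%:R
  = (unsat t :&: far (unsat s) == set0)%:R :> R.
Proof.
set J := unsat s; set W := vars_of J.
rewrite -(sumr_indicator_eq (overlay W s t) (fun=> (unsat t :&: far J == set0)%:R)).
apply: eq_bigr => u _; rewrite -natrM mulnb; congr ((nat_of_bool _)%:R).
rewrite eq_overlay -(sub_unsatE _ (subxx J)).
case: (boolP (agree_off W t u)) => agree_tu; rewrite ?andbF // !andbT.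
case: (boolP (J \subset unsat u)) => [J_unsat | J_not_unsat] /=.
  rewrite {1}(unsat_decomp J_unsat) -(unsat_far_eq agree_tu) setU_eql //.
  by rewrite setIA [J :&: _]setIC -setIA setI_far setI0.
by apply/negbTE; apply: contra J_not_unsat => /eqP ->.
Qed.

(* Averaged over the assignments sharing the unsatisfied clauses of [s], one
   round lands uniformly on the assignments with no unsatisfied clause far
   from [unsat s]. *)
Definition class_kernel (s t : assignment) : R :=
  (unsat t :&: far (unsat s) == set0)%:R / n_avoid (far (unsat s)).

Lemma step_kernelE (s t : assignment) : step_kernel phi R s t =
  (agree_off (vars_of (unsat s)) t s)%:R / 2 ^+ #|vars_of (unsat s)|.
Proof.
by rewrite /step_kernel /agree_off /resample_vars /vars_of; case: ifP; rewrite ?mul1r ?mul0r.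
Qed.

Lemma sum_class_step_kernel (s t : assignment) :
  \sum_(u | unsat u == unsat s) step_kernel phi R u t =
  \sum_(u | unsat u == unsat s) class_kernel u t.
Proof.
set J := unsat s; set W := vars_of J.
under eq_bigr => u /eqP eq_u do rewrite step_kernelE eq_u.
under [RHS]eq_bigr => u /eqP eq_u do rewrite /class_kernel eq_u -/(class_kernel s t).
rewrite -[LHS]big_distrl /= [in X in X = _]sumr_mkcond_indicator [RHS]sumr_mkcond_indicator.
rewrite -[RHS]big_distrl /=.
under eq_bigr do rewrite -natrM mulnb.
rewrite sum_class_agree_off -/(class_size J) /class_kernel n_avoid_far -/J -/W.
have := class_size_gt0 s; rewrite -/J => /lt0r_neq0 size_neq0.
by field; rewrite size_neq0 expf_neq0 ?pnatr_eq0.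
Qed.

Lemma sum_step_kernel (f : assignment -> R) :
  (forall u v, unsat u = unsat v -> f u = f v) ->
  forall t, \sum_u f u * step_kernel phi R u t = \sum_u f u * class_kernel u t.
Proof.
move=> f_class t.
rewrite (partition_big unsat predT) // [RHS](partition_big unsat predT) //=.
apply: eq_bigr => J _; case: (pickP (fun u => unsat u == J)) => [s /eqP <- | no_s]; last first.
  by rewrite !big_pred0 // => u; rewrite no_s.
under eq_bigr => u /eqP/f_class -> do [].
under [RHS]eq_bigr => u /eqP/f_class -> do [].
by rewrite -[LHS]big_distrr -[RHS]big_distrr /= sum_class_step_kernel.
Qed.

Local Notation law := (state_law phi R).

Lemma state_law_class r (u v : assignment) : unsat u = unsat v -> law r u = law r v.
Proof.
elim: r u v => [//|r IHr] u v eq_uv /=.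
by rewrite !(sum_step_kernel IHr); apply: eq_bigr => s _; rewrite /class_kernel eq_uv.
Qed.

Lemma state_lawS r t : law r.+1 t = \sum_s law r s * class_kernel s t.
Proof. exact: sum_step_kernel (@state_law_class r) t. Qed.

Lemma class_kernel_ge0 s t : 0 <= class_kernel s t.
Proof. by rewrite divr_ge0 ?ler0n ?n_avoid_ge0. Qed.

Lemma class_kernel_sum1 s : \sum_t class_kernel s t = 1.
Proof. by rewrite -big_distrl /= divff // lt0r_neq0 ?n_avoid_far_gt0. Qed.

Lemma state_law_ge0 r t : 0 <= law r t.
Proof.
elim: r t => [|r IHr] t; first by rewrite invr_ge0 exprn_ge0 ?ler0n.
by rewrite state_lawS sumr_ge0 // => s _; rewrite mulr_ge0 ?class_kernel_ge0.
Qed.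

Lemma state_law_sum1 r : \sum_t law r t = 1.
Proof.
elim: r => [|r IHr].
  rewrite /= sumr_const card_ffun card_bool card_ord.
  by rewrite -(mulr_natr ((2%:R ^+ n)^-1 : R)) natrX mulVf // expf_neq0 ?pnatr_eq0.
under eq_bigr do rewrite state_lawS.
rewrite exchange_big /= -{}IHr; apply: eq_bigr => s _.
by rewrite -big_distrr /= class_kernel_sum1 mulr1.
Qed.

Definition n_unsat_avoid (w : 'I_m) (S : {set 'I_m}) : R :=
  \sum_(X : assignment) ((w \in unsat X) && (unsat X :&: S == set0))%:R.

Lemma n_unsat_avoid_ge0 w (S : {set 'I_m}) : 0 <= n_unsat_avoid w S.
Proof. by apply: sumr_ge0 => X _; exact: ler0n. Qed.

Lemma n_avoid_setU1 w (S : {set 'I_m}) : n_avoid S = n_avoid (w |: S) + n_unsat_avoid w S.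
Proof.
rewrite /n_avoid /n_unsat_avoid -big_split /=; apply: eq_bigr => X _.
rewrite setIUr setU_eq0 -natrD.
have -> : (unsat X :&: [set w] == set0) = (w \notin unsat X).
  by rewrite setI_eq0 disjoint_sym disjoints1.
by case: (w \in unsat X); case: (_ == set0).
Qed.

Lemma n_avoid_setD_le (S G : {set 'I_m}) :
  n_avoid (S :\: G) <= n_avoid S + \sum_(w in S :&: G) n_unsat_avoid w (S :\: G).
Proof.
rewrite /n_avoid /n_unsat_avoid exchange_big -big_split /=; apply: ler_sum => X _.
have sum_ge0 (P : pred 'I_m) (F : 'I_m -> bool) : 0 <= \sum_(w | P w) (F w)%:R :> R.
  by apply: sumr_ge0 => w _; exact: ler0n.
case: (boolP (unsat X :&: (S :\: G) == set0)) => [avoid_SG | _]; last first.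
  by rewrite addr_ge0 ?ler0n ?sum_ge0.
case: (boolP (unsat X :&: S == set0)) => [_ | /set0Pn[j /setIP[j_unsat jS]]].
  by rewrite lerDl sum_ge0.
have jG : j \in G.
  apply: contraTT avoid_SG => jnG; apply/set0Pn.
  by exists j; rewrite in_setI in_setD j_unsat jS jnG.
have jSG : j \in S :&: G by rewrite in_setI jS jG.
by rewrite (bigD1 j jSG) /= j_unsat add0r lerDl sum_ge0.
Qed.

Lemma n_unsat_avoid_far w (S : {set 'I_m}) : w \notin S ->
  n_unsat_avoid w S * 2 ^+ k = n_avoid (S :\: nbhd [set w]).
Proof.
move=> wnS; set S' := S :\: nbhd [set w].
have S'_far : S' \subset far [set w] by rewrite /S' /far setDE subsetIr.
have -> : n_unsat_avoid w S = n_unsat_avoid w S'.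
  apply: eq_bigr => X _; case w_unsat: (w \in unsat X) => //=.
  congr ((nat_of_bool _)%:R); congr (_ == set0); apply/setP => j; rewrite !in_setI in_setD.
  case j_unsat: (j \in unsat X) => //=; case jS: (j \in S); rewrite ?andbF // andbT.
  have neq_wj : w != j by apply: contraNneq wnS => ->.
  by rewrite in_nbhd1 (unsat_disjoint w_unsat j_unsat neq_wj).
have w_unsat : [set w] \subset unsat (falsifier w) by rewrite sub1set falsifier_unsat.
have := sum_unsat_far (fun B => B :&: S' == set0) w_unsat.
rewrite /vars_of big_set1 card_cvars.
under eq_bigr do rewrite -setIA (setIidPr S'_far).
under [in RHS]eq_bigr do rewrite -setIA (setIidPr S'_far) sub1set.
by rewrite mulrC => <-.
Qed.

Lemma card_clauses_through w y : y \in cvars w ->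
  (#|[set j | y \in cvars j] :\ w| <= d.-1)%N.
Proof.
move=> yw; have := max_occ y; rewrite (cardsD1 w) inE yw add1n.
by case: d.
Qed.

Local Notation D := ((d.-1)%:R : R).

(* [n_unsat_avoid w S <= x * n_avoid S] bounds by [x] the probability that [w]
   is unsatisfied given that no clause of [S] is: a local lemma with the weight
   [x] on every clause, in which the at most [d - 1] other clauses through a
   variable of [w] cost one factor [1 - D * x]. *)
Variable x : R.
Hypotheses (x_gt0 : 0 < x) (x_slack : 2 * x <= 1 - D * x)
  (x_lll : (2 ^+ k)^-1 <= x * (1 - D * x) ^+ k.-1).

Lemma one_subDx_gt0 : 0 < 1 - D * x.
Proof. by apply: lt_le_trans x_slack; rewrite mulr_gt0. Qed.

Section Peel.
Variable b : nat.
(* The induction hypothesis of [n_unsat_avoid_private]. *)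
Hypothesis private_var_bound : forall (S : {set 'I_m}) w,
  (#|S| < b)%N -> w \notin S -> ~~ (cvars w \subset vars_of S) ->
  n_unsat_avoid w S <= x * n_avoid S.

Lemma n_avoid_drop_var (S : {set 'I_m}) u y :
  (#|S| <= b)%N -> u \notin S -> y \in cvars u ->
  (1 - D * x) * n_avoid (S :\: [set j | y \in cvars j]) <= n_avoid S.
Proof.
move=> card_S unS yu; set G := [set j | y \in cvars j]; set S1 := S :\: G.
have card_G : (#|S :&: G| <= d.-1)%N.
  apply: leq_trans (card_clauses_through yu); apply: subset_leq_card.
  by apply/subsetP => j; rewrite !inE => /andP[jS ->]; rewrite andbT; apply: contraNneq unS => <-.
have bound_G w : w \in S :&: G -> n_unsat_avoid w S1 <= x * n_avoid S1.
  rewrite in_setI => /andP[wS wG]; apply: private_var_bound.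
  - apply: leq_trans card_S; apply: proper_card; rewrite properE subsetDl /=.
    by apply/subsetPn; exists w; rewrite // in_setD wG.
  - by rewrite in_setD wG.
  - apply/subsetPn; exists y; first by move: wG; rewrite inE.
    by apply/bigcupP => -[j]; rewrite in_setD inE => /andP[/negP].
have sum_G : \sum_(w in S :&: G) n_unsat_avoid w S1 <= D * x * n_avoid S1.
  apply: le_trans (ler_sum _ bound_G) _; rewrite sumr_const -mulrA -[X in X <= _]mulr_natl.
  by apply: ler_wpM2r; [exact: mulr_ge0 (ltW x_gt0) (n_avoid_ge0 _) | rewrite ler_nat].
have := n_avoid_setD_le S G; rewrite -/S1; lra.
Qed.

Lemma n_avoid_peel u (L : seq 'I_n) (S : {set 'I_m}) :
  (#|S| <= b)%N -> u \notin S -> {subset L <= cvars u} ->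
  {in S :&: nbhd [set u], forall j, has (fun y => y \in cvars j) L} ->
  (1 - D * x) ^+ size L * n_avoid (S :\: nbhd [set u]) <= n_avoid S.
Proof.
elim: L S => [|y L IHL] S card_S unS Lu cover /=.
  rewrite expr0 mul1r; suff -> : S :\: nbhd [set u] = S by [].
  by apply/setDidPl; rewrite -setI_eq0; apply/set0Pn => -[j /cover].
set S1 := S :\: [set j | y \in cvars j].
have yu : y \in cvars u by apply: Lu; exact: mem_head.
have S1_nbhd : S1 :\: nbhd [set u] = S :\: nbhd [set u].
  apply/setP => j; rewrite !in_setD in_nbhd1 negbK inE.
  by case: (boolP [disjoint _ & _]) => //= disj; rewrite (disjointFr disj yu).
rewrite exprS -mulrA -S1_nbhd; apply: le_trans (n_avoid_drop_var card_S unS yu).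
apply: ler_wpM2l; first exact: ltW one_subDx_gt0.
apply: IHL => [|||j].
- exact: leq_trans (subset_leq_card (subsetDl _ _)) card_S.
- by apply: contra unS; rewrite in_setD => /andP[].
- by move=> z zL; apply: Lu; rewrite inE zL orbT.
- rewrite in_setI in_setD in_set => /andP[/andP[ynj jS] j_nbhd].
  by move: (cover j); rewrite in_setI jS j_nbhd /= (negbTE ynj); apply.
Qed.

Lemma n_unsat_avoid_cover w (S : {set 'I_m}) (V : {set 'I_n}) :
  (#|S| <= b)%N -> w \notin S -> V \subset cvars w ->
  {in S :&: nbhd [set w], forall j, ~~ [disjoint cvars j & V]} ->
  (1 - D * x) ^+ #|V| * n_unsat_avoid w S <= x * (1 - D * x) ^+ k.-1 * n_avoid S.
Proof.
move=> card_S wnS Vw cover.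
have peel : (1 - D * x) ^+ #|V| * n_avoid (S :\: nbhd [set w]) <= n_avoid S.
  rewrite cardE; apply: n_avoid_peel => // [z | j /cover].
    by rewrite mem_enum => /(subsetP Vw).
  rewrite -setI_eq0 => /set0Pn[z]; rewrite in_setI => /andP[zj zV].
  by apply/hasP; exists z; rewrite ?mem_enum.
have two_k_gt0 : (0 : R) < 2 ^+ k by rewrite exprn_gt0.
apply: (@le_trans _ _ (n_avoid S / 2 ^+ k)).
  by rewrite ler_pdivlMr // -mulrA n_unsat_avoid_far.
by rewrite mulrC; apply: ler_wpM2r; first exact: n_avoid_ge0.
Qed.

End Peel.

Lemma n_unsat_avoid_private b (S : {set 'I_m}) w : (#|S| < b)%N -> w \notin S ->
  ~~ (cvars w \subset vars_of S) -> n_unsat_avoid w S <= x * n_avoid S.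
Proof.
elim: b S w => // b IHb S w card_S wnS /subsetPn[y yw ynS].
have card_V : #|cvars w :\ y| = k.-1.
  by rewrite -[in RHS](card_cvars w) (cardsD1 y (cvars w)) yw.
have cover : {in S :&: nbhd [set w], forall j, ~~ [disjoint cvars j & cvars w :\ y]}.
  move=> j; rewrite in_setI in_nbhd1 => /andP[jS]; rewrite -!setI_eq0 => /set0Pn[z].
  rewrite in_setI => /andP[zw zj]; apply/set0Pn; exists z.
  rewrite in_setI in_setD1 zj zw andbT.
  by apply: contraNneq ynS => <-; apply/bigcupP; exists j.
have := n_unsat_avoid_cover IHb card_S wnS (subsetDl _ _) cover.
rewrite card_V -[X in _ <= X]mulrA [X in _ <= X]mulrCA.
by rewrite ler_pM2l ?exprn_gt0 ?one_subDx_gt0.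
Qed.

Lemma n_unsat_avoid_le w (S : {set 'I_m}) :
  w \notin S -> (1 - D * x) * n_unsat_avoid w S <= x * n_avoid S.
Proof.
move=> wnS; have cover : {in S :&: nbhd [set w], forall j, ~~ [disjoint cvars j & cvars w]}.
  by move=> j; rewrite in_setI in_nbhd1 disjoint_sym => /andP[].
have := n_unsat_avoid_cover (@n_unsat_avoid_private #|S|) (leqnn _) wnS (subxx _) cover.
rewrite card_cvars -[in X in X * _ <= _](prednK k_gt0) exprSr.
rewrite -[X in X <= _]mulrA -[X in _ <= X]mulrA [X in _ <= X]mulrCA.
by rewrite ler_pM2l ?exprn_gt0 ?one_subDx_gt0.
Qed.

Lemma n_unsat_avoid_half w (S : {set 'I_m}) : w \notin S -> 2 * n_unsat_avoid w S <= n_avoid S.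
Proof.
move=> wnS; rewrite -(ler_pM2l x_gt0) mulrCA; apply: le_trans (n_unsat_avoid_le wnS).
by rewrite mulrA; apply: ler_wpM2r => //; exact: n_unsat_avoid_ge0.
Qed.

Lemma n_avoid_gt0 (S : {set 'I_m}) : 0 < n_avoid S.
Proof.
elim: {S}_.+1 {-2}S (ltnSn #|S|) => // c IHc S card_S.
case: (set_0Vmem S) => [-> | [w wS]].
  rewrite /n_avoid (bigD1 [ffun=> false]) //= setI0 eqxx ltr_pwDl ?ltr01 //.
  by apply: sumr_ge0 => X _; exact: ler0n.
have := n_avoid_setU1 w (S :\ w); rewrite setD1K // => split_w.
have := n_unsat_avoid_half (negbT (setD11 w S)).
have := IHc (S :\ w); rewrite (cardsD1 w S) wS in card_S => /(_ card_S).
lra.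
Qed.

Definition n_unsat1 (S : {set 'I_m}) : R :=
  \sum_(X : assignment) (#|unsat X :&: S| == 1)%N%:R.

Lemma n_unsat1_ge0 (S : {set 'I_m}) : 0 <= n_unsat1 S.
Proof. by apply: sumr_ge0 => X _; exact: ler0n. Qed.

Lemma n_unsat1_le (S : {set 'I_m}) : n_unsat1 S <= m%:R * n_avoid S.
Proof.
apply: (@le_trans _ _ (\sum_(w in S) n_unsat_avoid w (S :\ w))).
  rewrite /n_unsat1 /n_unsat_avoid exchange_big /=; apply: ler_sum => X _.
  case: (boolP (#|unsat X :&: S| == 1)%N) => [/cards1P[w unsat_S] | _]; last by rewrite sumr_ge0.
  have /setIP[w_unsat wS] : w \in unsat X :&: S by rewrite unsat_S set11.
  rewrite (bigD1 w) //= w_unsat setIDA unsat_S setDv eqxx lerDl.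
  by apply: sumr_ge0 => v _; exact: ler0n.
apply: (@le_trans _ _ (\sum_(w in S) n_avoid S)).
  apply: ler_sum => w wS; have := n_avoid_setU1 w (S :\ w); rewrite setD1K //.
  by have := n_unsat_avoid_half (negbT (setD11 w S)); lra.
rewrite sumr_const -[X in X <= _]mulr_natl; apply: ler_wpM2r; first exact: n_avoid_ge0.
by rewrite ler_nat; apply: leq_trans (max_card _) _; rewrite card_ord.
Qed.

Lemma unsat_realized (J : {set 'I_m}) (X : assignment) :
  J \subset unsat X -> exists s, unsat s = J.
Proof.
move=> J_unsat; have := n_avoid_gt0 (far J); rewrite /n_avoid.
case: (pickP (fun t => unsat t :&: far J == set0)) => [t /eqP t_avoid _ | none].
  by exists (overlay (vars_of J) X t); rewrite unsat_overlay // t_avoid setU0.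
by rewrite big1 ?ltxx // => t _; rewrite none.
Qed.

(* [potential] solves the Poisson equation of the chain for the cost
   [#|unsat s|] (lemma [sum_class_kernel_potential]), so the expected number of
   resampled clauses telescopes. *)
Definition potential (s : assignment) : R :=
  n_unsat1 (far (unsat s)) / n_avoid (far (unsat s)).

Lemma potential_ge0 (s : assignment) : 0 <= potential s.
Proof. by rewrite divr_ge0 ?n_unsat1_ge0 ?n_avoid_ge0. Qed.

Lemma potential_le (s : assignment) : potential s <= m%:R.
Proof. by rewrite ler_pdivrMr ?n_avoid_gt0 ?n_unsat1_le. Qed.

Lemma class_size_potential (s : assignment) : class_size (unsat s) * potential s =
  \sum_X ((unsat s \subset unsat X) && (#|unsat X :&: far (unsat s)| == 1)%N)%:R.
Proof.
rewrite /potential n_avoid_far /n_unsat1 (sum_unsat_far (fun B => #|B| == 1)%N (subxx _)).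
have /lt0r_neq0 size_neq0 := class_size_gt0 s.
by field; rewrite size_neq0 expf_neq0 ?pnatr_eq0.
Qed.

Lemma sum_avoid_potential (S : {set 'I_m}) :
  \sum_t (unsat t :&: S == set0)%:R * potential t =
  \sum_(J : {set 'I_m}) (J :&: S == set0)%:R *
    \sum_X ((J \subset unsat X) && (#|unsat X :&: far J| == 1)%N)%:R.
Proof.
rewrite (partition_big unsat predT) //=; apply: eq_bigr => J _.
case: (pickP (fun t => unsat t == J)) => [s /eqP <- | none].
  under eq_bigr => t /eqP eq_t do rewrite /potential eq_t -/(potential s).
  by rewrite -big_distrr /= sumr_mkcond_indicator -big_distrl /= class_size_potential.
rewrite big_pred0 => [|t]; last by rewrite none.
rewrite big1 ?mulr0 // => X _; case: (boolP (J \subset unsat X)) => //= J_unsat.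
by have [s eq_s] := unsat_realized J_unsat; have := none s; rewrite eq_s eqxx.
Qed.

Lemma sum_avoid_unsat_sub_potential (S : {set 'I_m}) :
  \sum_t (unsat t :&: S == set0)%:R * (#|unsat t|%:R - potential t) = - n_unsat1 S.
Proof.
have sum_J (X : assignment) : \sum_(J : {set 'I_m})
    (J :&: S == set0)%:R * ((J \subset unsat X) && (#|unsat X :&: far J| == 1)%N)%:R =
  ((unsat X :&: S == set0)%:R * #|unsat X|%:R + (#|unsat X :&: S| == 1)%N%:R : R).
  rewrite (eq_bigr (fun J : {set 'I_m} =>
    ((J \subset unsat X) && (#|unsat X :\: J| == 1)%N)%:R * (J :&: S == set0)%:R)); last first.
    move=> J _; rewrite mulrC; case: (boolP (J \subset unsat X)) => //= J_unsat.
    by rewrite unsat_far.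
  by rewrite -sumr_mkcond_indicator big_setD1_index sum_setD1_disjoint.
under eq_bigr do rewrite mulrBr.
rewrite sumrB sum_avoid_potential; under [X in _ - X]eq_bigr do rewrite big_distrr.
rewrite [X in _ - X]exchange_big /=; under [X in _ - X]eq_bigr do rewrite sum_J.
by rewrite big_split /= opprD addrA subrr add0r.
Qed.

Lemma sum_class_kernel_potential (s : assignment) :
  \sum_t class_kernel s t * (#|unsat t|%:R - potential t) = - potential s.
Proof.
under eq_bigr do rewrite /class_kernel mulrAC.
by rewrite -big_distrl /= sum_avoid_unsat_sub_potential mulNr.
Qed.

Definition mean_unsat r : R := \sum_s law r s * #|unsat s|%:R.

Definition mean_potential r : R := \sum_s law r s * potential s.

Lemma sum_law_ge0 r (f : assignment -> R) :
  (forall s, 0 <= f s) -> 0 <= \sum_s law r s * f s.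
Proof. by move=> f_ge0; apply: sumr_ge0 => s _; rewrite mulr_ge0 ?state_law_ge0. Qed.

Lemma sum_law_le r (f : assignment -> R) c :
  (forall s, f s <= c) -> \sum_s law r s * f s <= c.
Proof.
move=> f_le; rewrite -[c]mul1r -(state_law_sum1 r) big_distrl /=.
by apply: ler_sum => s _; apply: ler_wpM2l; [exact: state_law_ge0 | exact: f_le].
Qed.

Lemma mean_unsatS r : mean_unsat r.+1 = mean_potential r.+1 - mean_potential r.
Proof.
suff : mean_unsat r.+1 - mean_potential r.+1 = - mean_potential r by move=> h; lra.
rewrite /mean_unsat /mean_potential -sumrB.
under eq_bigr do rewrite -mulrBr state_lawS big_distrl /=.
rewrite exchange_big /= -sumrN; apply: eq_bigr => s _.
under eq_bigr do rewrite -mulrA.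
by rewrite -big_distrr /= sum_class_kernel_potential mulrN.
Qed.

Lemma expected_resampledE T : expected_resampled phi R T.+1 =
  mean_unsat 0 + mean_potential T - mean_potential 0.
Proof.
elim: T => [|T IHT]; first by rewrite /expected_resampled big_ord1 addrK.
rewrite /expected_resampled big_ord_recr -/(expected_resampled _ _ _) IHT.
by rewrite -/(mean_unsat T.+1) mean_unsatS /=; ring.
Qed.

Lemma expected_resampled_le T : expected_resampled phi R T <= (2 * m)%:R.
Proof.
case: T => [|T]; first by rewrite /expected_resampled big_ord0 ler0n.
have unsat_le s : #|unsat s|%:R <= m%:R :> R.
  by rewrite ler_nat; apply: leq_trans (max_card _) _; rewrite card_ord.
have := sum_law_le 0 unsat_le; have := sum_law_le T potential_le.
have := sum_law_ge0 0 potential_ge0.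
rewrite expected_resampledE -/(mean_unsat 0) -!/(mean_potential _) natrM; lra.
Qed.

Lemma n_avoid_setT : n_avoid setT = (num_sat phi)%:R.
Proof.
rewrite /n_avoid; under eq_bigr do rewrite setIT.
by rewrite sumr_indicator /num_sat; congr (_%:R); apply: eq_card => s; rewrite inE satisfiesE.
Qed.

Lemma num_sat_gt0 : (0 < num_sat phi)%N.
Proof. by rewrite -(ltr0n R) -n_avoid_setT n_avoid_gt0. Qed.

Lemma step_kernel_satisfied t : unsat t = set0 -> step_kernel phi R t t = 1.
Proof.
move=> t_sat; have agree_tt : agree_off (vars_of (unsat t)) t t by apply/agree_offP.
by rewrite step_kernelE agree_tt /vars_of t_sat big_set0 cards0 expr0 divr1.
Qed.

Lemma law_satisfied_mono t : unsat t = set0 -> {homo law^~ t : r r' / (r <= r')%N >-> r <= r'}.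
Proof.
move=> t_sat; apply: homo_leq => [a | b a c | r]; [exact: le_refl | exact: le_trans |].
rewrite [law r.+1 t]/= (bigD1 t) //= step_kernel_satisfied // mulr1 lerDl.
apply: sumr_ge0 => s _; rewrite mulr_ge0 ?state_law_ge0 //.
by rewrite step_kernelE divr_ge0 ?ler0n ?exprn_ge0.
Qed.

(* All satisfying assignments have probability [law r t], so the middle term
   is the probability of not being absorbed after [r] rounds. *)
Lemma law_satisfied_deficit r t : unsat t = set0 ->
  0 <= 1 - law r t * n_avoid setT <= mean_unsat r.
Proof.
move=> t_sat; have -> : 1 - law r t * n_avoid setT = \sum_s law r s * (unsat s != set0)%:R.
  rewrite -[X in X - _](state_law_sum1 r) /n_avoid big_distrr -sumrB /=; apply: eq_bigr => s _.
  rewrite setIT; case: eqP => [s_sat | _]; last by rewrite mulr0 subr0 mulr1.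
  by rewrite mulr1 mulr0 (@state_law_class r s t) ?subrr // s_sat t_sat.
apply/andP; split; first by apply: sum_law_ge0 => s; exact: ler0n.
apply: ler_sum => s _; apply: ler_wpM2l; first exact: state_law_ge0.
by rewrite ler_nat -card_gt0; case: #|_|.
Qed.

Lemma law_satisfied_dist r t : unsat t = set0 ->
  `|(num_sat phi)%:R^-1 - law r t| <= (2 * m)%:R / r.+1%:R.
Proof.
move=> t_sat; rewrite -n_avoid_setT; set N := n_avoid setT.
have N_ge1 : 1 <= N by rewrite /N n_avoid_setT ler1n num_sat_gt0.
have N_gt0 : 0 < N := lt_le_trans ltr01 N_ge1.
pose deficit i := 1 - law i t * N.
have deficitP i : 0 <= deficit i <= mean_unsat i := law_satisfied_deficit i t_sat.
have deficit_le : r.+1%:R * deficit r <= (2 * m)%:R.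
  apply: le_trans (expected_resampled_le r.+1).
  rewrite mulr_natl -{1}(card_ord r.+1) -sumr_const.
  apply: ler_sum => i _; apply: (@le_trans _ _ (deficit i)); last by case/andP: (deficitP i).
  rewrite lerD2l lerN2 ler_wpM2r ?(ltW N_gt0) //.
  by apply: law_satisfied_mono; rewrite // -ltnS.
have -> : N^-1 - law r t = deficit r / N by rewrite /deficit mulrBl mul1r mulfK // lt0r_neq0.
have deficit_ge0 : 0 <= deficit r by case/andP: (deficitP r).
rewrite ger0_norm ?divr_ge0 ?(ltW N_gt0) //; apply: (@le_trans _ _ (deficit r)).
  by rewrite ler_pdivrMr // ler_peMr.
by rewrite ler_pdivlMr ?ltr0n // mulrC.
Qed.
End Formula.

From mathcomp Require Import all_classical all_reals all_analysis.
Import numFieldNormedType.Exports.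
Local Open Scope classical_set_scope.
Local Open Scope ring_scope.

Section LocalLemmaWeight.
Variable R : realType.

Lemma expR1_gt2 : 2 < expR (1 : R).
Proof. by have := @expR_gt1Dx R 1 (oner_neq0 _); rewrite -(natrD R 1 1). Qed.

Lemma one_add_inv_pow_le_expR1 j : (0 < j)%N -> (1 + j%:R^-1) ^+ j <= expR (1 : R).
Proof.
move=> j_gt0; apply: le_trans (_ : expR (j%:R^-1) ^+ j <= _).
  by rewrite lerXn2r ?nnegrE ?expR_ge0 ?expR_ge1Dx // addr_ge0 ?invr_ge0 ?ler0n.
by rewrite -expRM_natr mulVf // pnatr_eq0 -lt0n.
Qed.

Lemma invexpR1_le_pow k : (1 < k)%N -> (expR (1 : R))^-1 <= (1 - k%:R^-1) ^+ k.-1.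
Proof.
move=> k_gt1; have j_gt0 : (0 < k.-1)%N by rewrite -ltnS prednK // ltnW.
have inv_k : 1 - k%:R^-1 = (1 + k.-1%:R^-1)^-1 :> R.
  rewrite -{1}(prednK (ltnW k_gt1)) -natr1.
  by field; rewrite pnatr_eq0 -lt0n j_gt0 /= lt0r_neq0 // ltr_wpDl ?ler0n.
by rewrite inv_k exprVn lef_pV2 ?posrE ?expR_gt0 ?exprn_gt0 ?one_add_inv_pow_le_expR1 //
  ltr_wpDr ?invr_ge0 ?ler0n.
Qed.

Lemma three_le_of_expR1_mul_le k : (0 < k)%N -> expR 1 * k%:R <= 2 ^+ k :> R -> (3 <= k)%N.
Proof.
move=> k_gt0; have := expR1_gt2.
by case: k k_gt0 => [|[|[|k]]] // _; rewrite ?expr1 ?mulr1 ?expr2 => e_gt2 ek_le; lra.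
Qed.

Lemma lll_weight_exists k d : (0 < k)%N ->
  d%:R <= 2 ^+ k / (expR 1 * k%:R) + 1 :> R ->
  exists x : R, [/\ 0 < x, 2 * x <= 1 - (d.-1)%:R * x &
                   (2 ^+ k)^-1 <= x * (1 - (d.-1)%:R * x) ^+ k.-1].
Proof.
move=> k_gt0 d_le.
case: (leqP d 1) => [d_le1 | d_gt1].
  have -> : d.-1 = 0%N by case: d d_le d_le1 => [|[]].
  exists (2 ^+ k)^-1; rewrite mul0r subr0 expr1n mulr1; split; rewrite ?invr_gt0 //.
  by rewrite ler_pdivrMr // mul1r -{1}(expr1 2) ler_eXn2l ?ltr1n.
set D : R := (d.-1)%:R; set kr : R := k%:R.
have D_ge1 : 1 <= D by rewrite ler1n -ltnS prednK // ltnW.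
have kr_gt0 : 0 < kr by rewrite ltr0n.
have DekD : D * (expR 1 * kr) <= 2 ^+ k.
  rewrite -ler_pdivlMr ?mulr_gt0 //; move: d_le.
  by rewrite -[d in d%:R](prednK (ltnW d_gt1)) -natr1 lerD2r.
have k_ge3 : (3 <= k)%N.
  have ek_le : expR 1 * kr <= 2 ^+ k.
    by apply: le_trans DekD; rewrite ler_peMl ?mulr_ge0 ?expR_ge0 ?ler0n.
  exact: three_le_of_expR1_mul_le k_gt0 ek_le.
have D_gt0 : 0 < D := lt_le_trans ltr01 D_ge1.
exists (D * kr)^-1; have -> : D * (D * kr)^-1 = kr^-1 by rewrite invfM mulVKf // lt0r_neq0.
split.
- by rewrite invr_gt0 mulr_gt0.
- have x_le : (D * kr)^-1 <= kr^-1.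
    by rewrite lef_pV2 ?posrE ?mulr_gt0 // ler_peMl // ltW.
  have : 3 * kr^-1 <= 1 by rewrite ler_pdivrMr // mul1r ler_nat.
  lra.
- apply: (@le_trans _ _ ((D * kr)^-1 * (expR 1)^-1)).
    by rewrite -invfM lef_pV2 ?posrE ?mulr_gt0 // -mulrA [kr * _]mulrC.
  apply: ler_wpM2l; first by rewrite invr_ge0 ltW // mulr_gt0.
  by apply: invexpR1_le_pow; apply: leq_trans k_ge3.
Qed.

End LocalLemmaWeight.

Lemma cvg_dist_le_div (R : realType) (u : nat -> R) (l C : R) :
  (forall r, `|l - u r| <= C / r.+1%:R) -> u @ \oo --> l.
Proof.
move=> dist_le; apply/cvgrPdist_le => eps eps_gt0.
apply: filterS (nbhs_infty_ger (C / eps)) => r r_ge; apply: le_trans (dist_le r) _.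
rewrite ler_pdivrMr ?ltr0n // mulrC -ler_pdivrMr //.
by apply: le_trans r_ge _; rewrite ler_nat.
Qed.

Theorem corollary20 :
  exists C : nat,
  forall (R : realType) (n m k d : nat) (phi : 'I_m -> k.-tuple ('I_n * bool)),
    (0 < k)%N ->
    is_kCNF phi ->
    max_occurrence phi d ->
    extremal phi ->
    (d%:R <= 2%:R ^+ k / (expR 1 * k%:R) + 1 :> R) ->
    [/\ (0 < num_sat phi)%N,
        (forall t : {ffun 'I_n -> bool}, satisfies phi t ->
           (fun r : nat => state_law phi R r t) @ \oo
             --> ((num_sat phi)%:R ^-1 : R))
      & (forall T : nat, expected_resampled phi R T <= (C * m)%:R)].
Proof.
exists 2%N => R n m k d phi k_gt0 kcnf max_occ ext d_le.
have [x [x_gt0 x_slack x_lll]] := lll_weight_exists k_gt0 d_le.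
split.
- exact (num_sat_gt0 k_gt0 kcnf max_occ ext x_gt0 x_slack x_lll).
- move=> t; rewrite satisfiesE => /eqP t_sat; apply: cvg_dist_le_div => r.
  exact (law_satisfied_dist k_gt0 kcnf max_occ ext x_gt0 x_slack x_lll r t_sat).
- exact (expected_resampled_le k_gt0 kcnf max_occ ext x_gt0 x_slack x_lll).
Qed.
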